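(* Let $\Phi\in\mathbb R^{P\times N}$, $R$ proper lsc convex with $R_\infty(z)>0$ for all $z\in\ker(\Phi)\setminus\{0\}$, $\bar y\in\mathbb R^P$, and assume the solution set $\mathfrak D(0,\bar y)$ of $\mathcal D(0,\bar y)$ is nonempty. Let $(\lambda_k,y_k)$ be a sequence with $\lambda_k>0$ and $(\|y_k-\bar y\|/\lambda_k,\lambda_k)\to(0,0)$. Then $q^\star(\lambda_k,y_k)\to q^F(0,\bar y)$.
   Context: For $\lambda\ge0$, $y\in\mathbb R^P$, $\mathcal D(\lambda,y)$ is the problem $\max_{q\in\mathbb R^P}\langle q,y\rangle-\frac\lambda2\|q\|^2-R^*(\Phi^*q)$ (Fenchel–Rockafellar dual of $\min_x R(x)+\frac1{2\lambda}\|y-\Phi x\|^2$ for $\lambda>0$, resp. of $\min_x R(x)$ s.t. $\Phi x=y$ for $\lambda=0$), $R^*$ the Fenchel conjugate; $\mathfrak D(\lambda,y)$ is its solution set. For $\lambda>0$ it has a unique solution $q^\star(\lambda,y)$. $q^F(0,y)$ is the minimum-norm element of the closed convex set $\mathfrak D(0,y)$. $R_\infty$ is the recession function $R_\infty(z)=\lim_{t\to+\infty}(R(x+tz)-R(x))/t$, $x\in\mathrm{dom}R$. *)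

From mathcomp Require Import ssreflect ssrfun ssrbool eqtype ssrnat seq fintype bigop.
From Stdlib Require Import Reals.
Open Scope R_scope.

Definition vec (n : nat) := 'I_n -> R.
Definition mat (P N : nat) := 'I_P -> 'I_N -> R.

Definition dot {n : nat} (u v : vec n) : R := \big[Rplus/R0]_(i < n) (u i * v i).
Definition vnorm {n : nat} (u : vec n) : R := sqrt (dot u u).
Definition vsub {n : nat} (u v : vec n) : vec n := fun i => u i - v i.
Definition vadd {n : nat} (u v : vec n) : vec n := fun i => u i + v i.
Definition vscale {n : nat} (t : R) (u : vec n) : vec n := fun i => t * u i.

Definition mapply {P N : nat} (Phi : mat P N) (x : vec N) : vec P :=
  fun i => \big[Rplus/R0]_(j < N) (Phi i j * x j).
Definition madjoint {P N : nat} (Phi : mat P N) (q : vec P) : vec N :=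
  fun j => \big[Rplus/R0]_(i < P) (Phi i j * q i).

(* extended values R U {+oo} (proper functions never take -oo) *)
Inductive ereal := Fin (r : R) | PInf.

Definition elt (c : R) (v : ereal) : Prop :=
  match v with Fin r => c < r | PInf => True end.

Definition proper_fun {N : nat} (F : vec N -> ereal) : Prop :=
  exists x r, F x = Fin r.

Definition lsc {N : nat} (F : vec N -> ereal) : Prop :=
  forall x c, elt c (F x) ->
    exists d, 0 < d /\ forall x', vnorm (vsub x' x) < d -> elt c (F x').

Definition convex_fun {N : nat} (F : vec N -> ereal) : Prop :=
  forall x y t r s, 0 < t < 1 -> F x = Fin r -> F y = Fin s ->
    exists u, F (vadd (vscale t x) (vscale (1 - t) y)) = Fin u /\
              u <= t * r + (1 - t) * s.

Definition is_sup (S : R -> Prop) (v : ereal) : Prop :=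
  match v with
  | Fin c => is_lub S c
  | PInf => forall M, exists s, S s /\ M < s
  end.

Definition conj_val {N : nat} (F : vec N -> ereal) (u : vec N) (v : ereal) : Prop :=
  is_sup (fun s => exists x r, F x = Fin r /\ s = dot u x - r) v.

Definition rec_quot {N : nat} (F : vec N -> ereal) (x z : vec N) (r t : R) : ereal :=
  match F (vadd x (vscale t z)) with
  | Fin a => Fin ((a - r) / t)
  | PInf => PInf
  end.

Definition rec_limit {N : nat} (F : vec N -> ereal) (x z : vec N) (r : R) (l : ereal) : Prop :=
  match l with
  | Fin c => forall eps, 0 < eps -> exists T, forall t, T < t ->
               exists a, rec_quot F x z r t = Fin a /\ Rabs (a - c) < eps
  | PInf => forall M, exists T, forall t, T < t -> elt M (rec_quot F x z r t)
  end.

(* R_oo(z) > 0 : for x in dom F, the limit defining the recession function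
   exists (in R U {+oo}) and is > 0 *)
Definition recession_pos {N : nat} (F : vec N -> ereal) (z : vec N) : Prop :=
  forall x r, F x = Fin r -> exists l, rec_limit F x z r l /\ elt 0 l.

(* dual objective <q,y> - lam/2 ||q||^2 - c, where c = R^*(Phi^* q) is finite *)
Definition dual_obj {P : nat} (lam : R) (y q : vec P) (c : R) : R :=
  dot q y - lam / 2 * (vnorm q) ^ 2 - c.

(* q is a solution of D(lam, y): q is in the solution set \mathfrak D(lam,y).
   Points with R^*(Phi^* q) = +oo have objective -oo. *)
Definition dual_sol {P N : nat} (Phi : mat P N) (F : vec N -> ereal)
    (lam : R) (y q : vec P) : Prop :=
  exists c, conj_val F (madjoint Phi q) (Fin c) /\
    forall q' c', conj_val F (madjoint Phi q') (Fin c') ->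
      dual_obj lam y q' c' <= dual_obj lam y q c.

Definition min_norm_sol {P N : nat} (Phi : mat P N) (F : vec N -> ereal)
    (y q : vec P) : Prop :=
  dual_sol Phi F 0 y q /\
  forall q', dual_sol Phi F 0 y q' -> vnorm q <= vnorm q'.

Definition vec_cv {n : nat} (u : nat -> vec n) (l : vec n) : Prop :=
  forall eps, 0 < eps -> exists K, forall k, (K <= k)%nat -> vnorm (vsub (u k) l) < eps.

(* Comparing the optimality of q_k := q*(lam_k, y_k) for D(lam_k, y_k) with that of q^F for
   D(0, ybar) gives
     lam_k/2 (|q_k|^2 - |q^F|^2) + gap_k <= <q_k - q^F, y_k - ybar>,
   where gap_k >= 0 is the suboptimality of q_k for D(0, ybar).  Divided by lam_k and combined
   with Young's inequality and |y_k - ybar|/lam_k -> 0, this shows that (q_k) is eventually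
   bounded, that every cluster point qb has |qb| <= |q^F|, and that gap_k = O(lam_k) -> 0, so
   that the inequalities defining R^*(Phi^* q_k) pass to the limit and qb solves D(0, ybar).
   The solution set of D(0, ybar) is convex and the squared norm is strictly convex, so q^F is
   its only element of norm <= |q^F|; hence qb = q^F, and a bounded sequence whose only
   cluster point is q^F converges to it. *)

From mathcomp Require Import ssreflect ssrfun ssrbool eqtype ssrnat seq fintype bigop.
From mathcomp Require Import Rstruct zify.
From Stdlib Require Import Reals Lra Classical ClassicalEpsilon FunctionalExtensionality.
Open Scope R_scope.
Set Implicit Arguments.
Unset Strict Implicit.

Lemma sum_ge0 (I : Type) (r : seq I) (p : pred I) (f : I -> R) :
  (forall i, 0 <= f i) -> 0 <= \big[Rplus/R0]_(i <- r | p i) f i.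
Proof.
move=> f_ge0; apply: big_ind => //; first exact: Rle_refl.
exact: Rplus_le_le_0_compat.
Qed.

Section DotProduct.

Variable n : nat.
Implicit Types (u v w : vec n) (s t a : R).

Lemma dot_sym u v : dot u v = dot v u.
Proof. by apply: eq_bigr => i _; rewrite Rmult_comm. Qed.

Lemma dot_linl s t u v w :
  dot (fun i => s * u i + t * v i) w = s * dot u w + t * dot v w.
Proof.
rewrite /dot !big_distrr -big_split /=; apply: eq_bigr => i _; ring.
Qed.

Lemma dot_linr s t u v w :
  dot w (fun i => s * u i + t * v i) = s * dot w u + t * dot w v.
Proof. by rewrite dot_sym dot_linl !(dot_sym w). Qed.

Lemma dot_subl u v w : dot (vsub u v) w = dot u w - dot v w.
Proof.
have -> : vsub u v = (fun i => 1 * u i + (-1) * v i).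
  by apply: functional_extensionality => i; rewrite /vsub; ring.
rewrite dot_linl; ring.
Qed.

Lemma dot_subr u v w : dot w (vsub u v) = dot w u - dot w v.
Proof. by rewrite dot_sym dot_subl !(dot_sym w). Qed.

Lemma dot_self_ge0 u : 0 <= dot u u.
Proof. by apply: sum_ge0 => i; apply: Rle_0_sqr. Qed.

Lemma vnorm_sq u : vnorm u ^ 2 = dot u u.
Proof. exact/pow2_sqrt/dot_self_ge0. Qed.

Lemma vnorm_le_sq u v : vnorm u <= vnorm v -> dot u u <= dot v v.
Proof. by move=> le_uv; rewrite -!vnorm_sq; apply: pow_incr; split => //; apply: sqrt_pos. Qed.

Lemma sqr_coord_le_dot u i : u i * u i <= dot u u.
Proof.
rewrite /dot (bigD1 i) //= -{1}[u i * u i]Rplus_0_r.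
by apply/Rplus_le_compat_l/sum_ge0 => j; apply: Rle_0_sqr.
Qed.

Lemma vec_eq_of_dot_sub_le0 u v :
  dot (vsub u v) (vsub u v) <= 0 -> forall i, u i = v i.
Proof.
move=> le0 i; have le_sq := sqr_coord_le_dot (vsub u v) i.
have : vsub u v i = 0 by nra.
rewrite /vsub; lra.
Qed.

Lemma dot_young a u v : 0 < a -> 2 * dot u v <= a * dot u u + dot v v / a.
Proof.
move=> a_gt0; have := dot_self_ge0 (fun i => a * u i + (-1) * v i).
rewrite dot_linl !dot_linr (dot_sym v u) => h.
apply: (Rmult_le_reg_l a) => //.
have -> : a * (a * dot u u + dot v v / a) = a * a * dot u u + dot v v by field; lra.
nra.
Qed.

Lemma dot_vsub_le u v : dot (vsub u v) (vsub u v) <= 2 * dot u u + 2 * dot v v.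
Proof.
have := dot_self_ge0 (fun i => 1 * u i + 1 * v i).
rewrite dot_subl !dot_subr dot_linl !dot_linr (dot_sym v u); lra.
Qed.

Lemma dot_midpoint u v :
  dot (fun i => /2 * u i + (1 - /2) * v i) (fun i => /2 * u i + (1 - /2) * v i)
  = (dot u u + dot v v) / 2 - dot (vsub u v) (vsub u v) / 4.
Proof. rewrite dot_subl !dot_subr dot_linl !dot_linr (dot_sym v u); field. Qed.

End DotProduct.

Lemma Un_cv_const c : Un_cv (fun _ => c) c.
Proof. by move=> e e_gt0; exists 0%nat => k _; rewrite /Rdist Rminus_diag Rabs_R0. Qed.

Lemma Un_cv_ext (a b : nat -> R) l : (forall k, a k = b k) -> Un_cv a l -> Un_cv b l.
Proof. by move=> /functional_extensionality ->. Qed.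

Lemma Un_cv_subseq (a : nat -> R) (phi : nat -> nat) l :
  (forall k, (k <= phi k)%nat) -> Un_cv a l -> Un_cv (fun k => a (phi k)) l.
Proof.
move=> phi_ge a_cv e e_gt0; have [K HK] := a_cv e e_gt0.
by exists K => k le_Kk; apply: HK; have := phi_ge k; lia.
Qed.

Lemma big_Un_cv (I : Type) (r : seq I) (p : pred I) (f : nat -> I -> R) (l : I -> R) :
  (forall i, Un_cv (fun k => f k i) (l i)) ->
  Un_cv (fun k => \big[Rplus/R0]_(i <- r | p i) f k i) (\big[Rplus/R0]_(i <- r | p i) l i).
Proof.
move=> f_cv; elim: r => [|i r IHr].
  by rewrite big_nil; apply: (@Un_cv_ext (fun _ => R0)) (Un_cv_const _) => k; rewrite big_nil.
rewrite big_cons; case: ifP => p_i.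
  by apply: Un_cv_ext (CV_plus _ _ _ _ (f_cv i) IHr) => k; rewrite big_cons p_i.
by apply: Un_cv_ext IHr => k; rewrite big_cons p_i.
Qed.

Definition coord_cv {n : nat} (u : nat -> vec n) (l : vec n) : Prop :=
  forall i, Un_cv (fun k => u k i) (l i).

Lemma dot_Un_cv n (u v : nat -> vec n) (lu lv : vec n) :
  coord_cv u lu -> coord_cv v lv -> Un_cv (fun k => dot (u k) (v k)) (dot lu lv).
Proof. by move=> u_cv v_cv; apply: big_Un_cv => i; apply: CV_mult. Qed.

Lemma coord_cv_vsub n (u : nat -> vec n) (lu w : vec n) :
  coord_cv u lu -> coord_cv (fun k => vsub (u k) w) (vsub lu w).
Proof. by move=> u_cv i; apply: CV_minus (u_cv i) (Un_cv_const _). Qed.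

Lemma madjoint_coord_cv P N (Phi : mat P N) (q : nat -> vec P) (lq : vec P) :
  coord_cv q lq -> coord_cv (fun k => madjoint Phi (q k)) (madjoint Phi lq).
Proof. by move=> q_cv j; apply: big_Un_cv => i; apply: CV_mult (Un_cv_const _) (q_cv i). Qed.

Definition increasing_index (phi : nat -> nat) : Prop := forall k, (phi k < phi k.+1)%nat.

Lemma increasing_index_ge phi : increasing_index phi -> forall k, (k <= phi k)%nat.
Proof. by move=> phi_incr; elim=> [|k IHk] //; apply: leq_ltn_trans IHk (phi_incr k). Qed.

Lemma increasing_index_comp phi chi :
  increasing_index phi -> increasing_index chi -> increasing_index (fun k => phi (chi k)).
Proof. by move=> phi_incr chi_incr k; apply: (homo_ltn ltn_trans phi_incr (chi_incr k)). Qed.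

Lemma ValAdh_subseq (a : nat -> R) l :
  ValAdh a l -> exists chi, increasing_index chi /\ Un_cv (fun k => a (chi k)) l.
Proof.
move=> a_adh.
have near_l m N : exists p, (N <= p)%nat /\ Rabs (a p - l) < / INR m.+1.
  have inv_gt0 : 0 < / INR m.+1 by apply/Rinv_0_lt_compat/lt_0_INR; lia.
  have [|p [le_Np a_p]] := a_adh (disc l (mkposreal _ inv_gt0)) N.
    by exists (mkposreal _ inv_gt0).
  by exists p; split => //; apply/leP.
have [g g_near] := choice _ (fun mN => near_l mN.1 mN.2).
pose chi := fix chi k := if k is k'.+1 then g (k, (chi k').+1) else g (0, 0)%nat.
exists chi; split.
  by move=> k; have [le_g _] := g_near (k.+1, (chi k).+1).
have chi_near k : Rabs (a (chi k) - l) < / INR k.+1.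
  by case: k => [|k]; [exact: (g_near (0, 0)%nat).2 | exact: (g_near (_, _)).2].
move=> e e_gt0; have [N [invN_lt N_gt0]] := archimed_cor1 e e_gt0.
exists N => k le_Nk; apply: Rlt_le_trans (chi_near k) _.
apply: Rle_trans (Rlt_le _ _ invN_lt).
by apply/Rinv_le_contravar/le_INR; [apply: lt_0_INR | ]; lia.
Qed.

Lemma bounded_subseq_cv (a : nat -> R) M :
  (forall k, Rabs (a k) <= M) ->
  exists chi, increasing_index chi /\ exists l, Un_cv (fun k => a (chi k)) l.
Proof.
move=> a_bnd; have [l a_adh] : exists l, ValAdh a l.
  apply: (Bolzano_Weierstrass a _ (compact_P3 (- M) M)) => k.
  by move: (a_bnd k) (Rle_abs (a k)) (Rle_abs (- a k)); rewrite Rabs_Ropp => ? ? ?; lra.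
by have [chi [chi_incr a_cv]] := ValAdh_subseq a_adh; exists chi; split; last exists l.
Qed.

Lemma bounded_vec_subseq_cv n (u : nat -> vec n) M :
  (forall k i, Rabs (u k i) <= M) ->
  exists phi, increasing_index phi /\ exists l, coord_cv (fun k => u (phi k)) l.
Proof.
move=> u_bnd.
suff /(_ n (leqnn n)) [phi [phi_incr [l l_cv]]] : forall m, (m <= n)%nat ->
    exists phi, increasing_index phi /\
    exists l : vec n, forall i : 'I_n, (i < m)%nat -> Un_cv (fun k => u (phi k) i) (l i).
  by exists phi; split => //; exists l => i; apply: l_cv.
elim=> [|m IHm] le_mn.
  by exists (fun k => k); split => [k|]; last exists (fun _ => 0).
have [phi [phi_incr [l l_cv]]] := IHm (ltnW le_mn).
have [chi [chi_incr [a a_cv]]] :=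
  bounded_subseq_cv (fun k => u_bnd (phi k) (Ordinal le_mn)).
exists (fun k => phi (chi k)); split; first exact: increasing_index_comp.
exists (fun i => if nat_of_ord i == m then a else l i) => i; rewrite ltnS leq_eqVlt.
case: eqP => [eq_im _ | _ /= lt_im].
  by have -> : i = Ordinal le_mn by apply: val_inj.
exact: (Un_cv_subseq (a := fun k => u (phi k) i) (increasing_index_ge chi_incr)
  (l_cv i lt_im)).
Qed.

Lemma vec_cv_of_cluster n (u : nat -> vec n) l K M :
  (forall k, (K <= k)%nat -> dot (u k) (u k) <= M) ->
  (forall phi l', (forall k, (k <= phi k)%nat) -> coord_cv (fun k => u (phi k)) l' ->
     forall i, l' i = l i) ->
  vec_cv u l.
Proof.
move=> u_bnd cluster_l; apply: NNPP => not_cv.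
have [eta [eta_gt0 far]] : exists eta, 0 < eta /\
    forall m, exists k, (maxn K m <= k)%nat /\ eta <= vnorm (vsub (u k) l).
  apply: NNPP => not_far; apply: not_cv => e e_gt0; apply: NNPP => not_tail.
  apply: not_far; exists e; split => // m; apply: NNPP => not_k; apply: not_tail.
  exists (maxn K m) => k le_k; apply: Rnot_le_lt => le_e; apply: not_k.
  by exists k.
have [phi0 phi0_far] := choice _ far.
have phi0_bnd k i : Rabs (u (phi0 k) i) <= 1 + M.
  have [le_phi0 _] := phi0_far k.
  have := u_bnd (phi0 k) (leq_trans (leq_maxl K k) le_phi0).
  have := sqr_coord_le_dot (u (phi0 k)) i.
  by case: (Rcase_abs (u (phi0 k) i)) => [/Rabs_left | /Rge_le/Rabs_pos_eq] -> ? ?; nra.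
have [psi [psi_incr [l' l'_cv]]] := bounded_vec_subseq_cv phi0_bnd.
have le_phi k : (k <= phi0 (psi k))%nat.
  have [le_phi0 _] := phi0_far (psi k).
  exact: leq_trans (increasing_index_ge psi_incr k) (leq_trans (leq_maxr K _) le_phi0).
have eq_l' := cluster_l _ _ le_phi l'_cv.
have lim0 : dot (vsub l' l) (vsub l' l) = 0.
  by apply: big1_seq => i _; rewrite /vsub eq_l' Rminus_diag Rmult_0_l.
have dist_cv := dot_Un_cv (coord_cv_vsub l l'_cv) (coord_cv_vsub l l'_cv).
have far_lim : eta ^ 2 <= dot (vsub l' l) (vsub l' l).
  apply: Rle_cv_lim (Un_cv_const _) dist_cv => k; rewrite -vnorm_sq.
  by apply: pow_incr; split; [lra | exact: (phi0_far (psi k)).2].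
by have := pow_lt _ 2 eta_gt0; lra.
Qed.

Section Conjugate.

Variables (N : nat) (F : vec N -> ereal).
Hypothesis F_proper : proper_fun F.

Lemma conj_val_ub u c x r : conj_val F u (Fin c) -> F x = Fin r -> dot u x - r <= c.
Proof. by move=> [c_ub _] Fx; apply: c_ub; exists x, r. Qed.

Lemma conj_val_of_ub u M :
  (forall x r, F x = Fin r -> dot u x - r <= M) ->
  exists c, conj_val F u (Fin c) /\ c <= M.
Proof.
move=> M_ub; have [x0 [r0 Fx0]] := F_proper.
have ub : bound (fun s => exists x r, F x = Fin r /\ s = dot u x - r).
  by exists M => _ [x [r [Fx ->]]]; apply: M_ub.
have [c c_lub] :=
  completeness _ ub (ex_intro _ _ (ex_intro _ x0 (ex_intro _ r0 (conj Fx0 erefl)))).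
exists c; split => //; apply: c_lub.2 => _ [x [r [Fx ->]]]; exact: M_ub.
Qed.

Lemma conj_val_convex s u v a b :
  0 <= s <= 1 -> conj_val F u (Fin a) -> conj_val F v (Fin b) ->
  exists c, conj_val F (fun j => s * u j + (1 - s) * v j) (Fin c) /\ c <= s * a + (1 - s) * b.
Proof.
move=> s01 conj_u conj_v; apply: conj_val_of_ub => x r Fx.
have := conj_val_ub conj_u Fx; have := conj_val_ub conj_v Fx.
rewrite dot_linl => ? ?; nra.
Qed.

End Conjugate.

Lemma le0_of_forall_le_mul a b : 0 <= b -> (forall t, 0 < t -> a <= t * b) -> a <= 0.
Proof.
move=> b_ge0 a_le; apply: Rnot_lt_le => a_gt0.
have t_gt0 : 0 < a / (b + 1) by apply: Rdiv_lt_0_compat; lra.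
have := a_le _ t_gt0.
have : a / (b + 1) * (b + 1) = a by field; lra.
nra.
Qed.

Lemma perturbation_ineq n lam gap t (q qF d : vec n) :
  0 < lam -> 0 < t ->
  lam / 2 * (dot q q - dot qF qF) + gap <= dot (vsub q qF) d ->
  dot q q - dot qF qF + 2 * gap / lam
    <= t * dot (vsub q qF) (vsub q qF) + (vnorm d / lam) ^ 2 / t.
Proof.
move=> lam_gt0 t_gt0 gap_le.
have young := dot_young (vsub q qF) d (Rmult_lt_0_compat _ _ lam_gt0 t_gt0).
apply: (Rmult_le_reg_l lam) => //.
have -> : lam * (dot q q - dot qF qF + 2 * gap / lam)
          = 2 * (lam / 2 * (dot q q - dot qF qF) + gap) by field; lra.
have -> : lam * (t * dot (vsub q qF) (vsub q qF) + (vnorm d / lam) ^ 2 / t)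
          = lam * t * dot (vsub q qF) (vsub q qF) + dot d d / (lam * t).
  by rewrite -(vnorm_sq d); field; lra.
lra.
Qed.

Section DualProblem.

Variables (P N : nat) (Phi : mat P N) (F : vec N -> ereal).
Hypothesis F_proper : proper_fun F.

Lemma madjoint_lin s t (q1 q2 : vec P) :
  madjoint Phi (fun i => s * q1 i + t * q2 i)
  = fun j => s * madjoint Phi q1 j + t * madjoint Phi q2 j.
Proof.
apply: functional_extensionality => j.
by rewrite /madjoint !big_distrr -big_split /=; apply: eq_bigr => i _; ring.
Qed.

Lemma dual_obj0 (y q : vec P) c : dual_obj 0 y q c = dot q y - c.
Proof. rewrite /dual_obj; field. Qed.

Lemma dual_sol0_convex (y q1 q2 : vec P) s :
  0 <= s <= 1 -> dual_sol Phi F 0 y q1 -> dual_sol Phi F 0 y q2 ->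
  dual_sol Phi F 0 y (fun i => s * q1 i + (1 - s) * q2 i).
Proof.
move=> s01 [c1 [conj1 opt1]] [c2 [conj2 opt2]].
have [c [conj_c le_c]] := conj_val_convex F_proper s01 conj1 conj2.
exists c; split; first by rewrite madjoint_lin.
move=> q' c' conj'; move: (opt1 _ _ conj') (opt1 _ _ conj2) (opt2 _ _ conj1).
rewrite !dual_obj0 dot_linl => ? ? ?; nra.
Qed.

Lemma min_norm_sol_unique (y qF q : vec P) :
  min_norm_sol Phi F y qF -> dual_sol Phi F 0 y q -> dot q q <= dot qF qF ->
  forall i, q i = qF i.
Proof.
move=> [sol_qF min_qF] sol_q le_q; apply: vec_eq_of_dot_sub_le0.
have half01 : 0 <= /2 <= 1 by lra.
have := vnorm_le_sq (min_qF _ (dual_sol0_convex half01 sol_q sol_qF)).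
rewrite dot_midpoint; lra.
Qed.

End DualProblem.

Section PerturbedDual.

Variables (P N : nat) (Phi : mat P N) (F : vec N -> ereal).
Variables (ybar qF : vec P) (cF : R).
Hypothesis F_proper : proper_fun F.
Hypothesis conj_qF : conj_val F (madjoint Phi qF) (Fin cF).
Hypothesis opt_qF : forall q c, conj_val F (madjoint Phi q) (Fin c) ->
  dual_obj 0 ybar q c <= dual_obj 0 ybar qF cF.

Lemma dual_sol0_of_conj_ub (q : vec P) :
  (forall x r, F x = Fin r ->
     dot (madjoint Phi q) x - r <= dot q ybar - (dot qF ybar - cF)) ->
  dual_sol Phi F 0 ybar q.
Proof.
move=> q_ub; have [c [conj_c le_c]] := conj_val_of_ub F_proper q_ub.
by exists c; split => // q' c' /opt_qF; rewrite !dual_obj0 => ?; lra.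
Qed.

Lemma dual_sol_gap lam (y q : vec P) :
  dual_sol Phi F lam y q ->
  exists c, conj_val F (madjoint Phi q) (Fin c) /\
    0 <= (dot qF ybar - cF) - (dot q ybar - c) /\
    lam / 2 * (dot q q - dot qF qF) + ((dot qF ybar - cF) - (dot q ybar - c))
      <= dot (vsub q qF) (vsub y ybar).
Proof.
move=> [c [conj_c opt_q]]; exists c; split => //.
move: (opt_qF conj_c) (opt_q _ _ conj_qF).
by rewrite !dual_obj0 /dual_obj !vnorm_sq dot_subl !dot_subr => ? ?; split; lra.
Qed.

Variables (lam : nat -> R) (y qs : nat -> vec P).
Hypothesis lam_gt0 : forall k, 0 < lam k.
Hypothesis qs_sol : forall k, dual_sol Phi F (lam k) (y k) (qs k).
Hypothesis eps_cv : Un_cv (fun k => vnorm (vsub (y k) ybar) / lam k) 0.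
Hypothesis lam_cv : Un_cv lam 0.

Lemma perturbed_sol_estimate k t :
  0 < t ->
  exists c, conj_val F (madjoint Phi (qs k)) (Fin c) /\
    0 <= 2 * ((dot qF ybar - cF) - (dot (qs k) ybar - c)) / lam k /\
    dot (qs k) (qs k) - dot qF qF + 2 * ((dot qF ybar - cF) - (dot (qs k) ybar - c)) / lam k
      <= t * dot (vsub (qs k) qF) (vsub (qs k) qF) + (vnorm (vsub (y k) ybar) / lam k) ^ 2 / t.
Proof.
move=> t_gt0; have [c [conj_c [gap_ge0 gap_le]]] := dual_sol_gap (qs_sol k).
exists c; split => //; split; last exact: perturbation_ineq (lam_gt0 k) t_gt0 gap_le.
by apply: Rle_mult_inv_pos; [lra | exact: lam_gt0].
Qed.

Lemma perturbed_sol_bounded :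
  exists K, forall k, (K <= k)%nat -> dot (qs k) (qs k) <= 3 * dot qF qF + 8.
Proof.
have [K eps_lt1] := eps_cv Rlt_0_1; exists K => k le_Kk.
have eps_sq : (vnorm (vsub (y k) ybar) / lam k) ^ 2 <= 1.
  have := eps_lt1 k (leP le_Kk); rewrite /Rdist Rminus_0_r => /Rabs_def2 [] ? ?; nra.
have quarter_gt0 : 0 < / 4 by lra.
have [c [_ [gap_ge0 estimate]]] := perturbed_sol_estimate k quarter_gt0.
have div_quarter e : e / / 4 = 4 * e by field.
rewrite div_quarter in estimate.
have := dot_vsub_le (qs k) qF; lra.
Qed.

Section ClusterPoint.

Variables (phi : nat -> nat) (qb : vec P).
Hypothesis phi_ge : forall k, (k <= phi k)%nat.
Hypothesis qs_cv : coord_cv (fun k => qs (phi k)) qb.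

Lemma cluster_dot_le : dot qb qb <= dot qF qF.
Proof.
have eps_cv' := Un_cv_subseq phi_ge eps_cv.
have dist_cv := dot_Un_cv (coord_cv_vsub qF qs_cv) (coord_cv_vsub qF qs_cv).
apply: Rminus_le; apply: (le0_of_forall_le_mul (dot_self_ge0 (vsub qb qF))) => t t_gt0.
have rhs_cv := CV_plus _ _ _ _ (CV_mult _ _ _ _ (Un_cv_const t) dist_cv)
  (CV_mult _ _ _ _ (CV_mult _ _ _ _ eps_cv' eps_cv') (Un_cv_const (/ t))).
have lhs_cv := CV_minus _ _ _ _ (dot_Un_cv qs_cv qs_cv) (Un_cv_const (dot qF qF)).
suff : dot qb qb - dot qF qF <= t * dot (vsub qb qF) (vsub qb qF) + 0 * 0 * / t by lra.
apply: Rle_cv_lim lhs_cv rhs_cv => k.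
have [c [_ [gap_ge0 estimate]]] := perturbed_sol_estimate (phi k) t_gt0.
move: gap_ge0 estimate; rewrite /Rdiv => ? ?; nra.
Qed.

Lemma cluster_conj_ub x r :
  F x = Fin r -> dot (madjoint Phi qb) x - r <= dot qb ybar - (dot qF ybar - cF).
Proof.
move=> Fx.
have eps_cv' := Un_cv_subseq phi_ge eps_cv.
have lam_cv' := Un_cv_subseq phi_ge lam_cv.
have dist_cv := dot_Un_cv (coord_cv_vsub qF qs_cv) (coord_cv_vsub qF qs_cv).
have ybar_cv : coord_cv (fun _ => ybar) ybar by move=> i; exact: Un_cv_const.
have x_cv : coord_cv (fun _ => x) x by move=> i; exact: Un_cv_const.
have lhs_cv := CV_minus _ _ _ _ (dot_Un_cv (madjoint_coord_cv Phi qs_cv) x_cv) (Un_cv_const r).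
have rhs_cv := CV_plus _ _ _ _
  (CV_minus _ _ _ _ (dot_Un_cv qs_cv ybar_cv) (Un_cv_const (dot qF ybar - cF)))
  (CV_mult _ _ _ _ lam_cv'
     (CV_mult _ _ _ _ (Un_cv_const (/ 2))
        (CV_plus _ _ _ _
           (CV_minus _ _ _ _ (CV_plus _ _ _ _ dist_cv (CV_mult _ _ _ _ eps_cv' eps_cv'))
              (dot_Un_cv qs_cv qs_cv))
           (Un_cv_const (dot qF qF))))).
apply: Rle_trans (Rle_cv_lim _ lhs_cv rhs_cv) _; last first.
  by rewrite Rmult_0_l Rplus_0_r; apply: Rle_refl.
move=> k.
have [c [conj_c [gap_ge0 gap_le]]] := dual_sol_gap (qs_sol (phi k)).
have := conj_val_ub conj_c Fx.
have := perturbation_ineq (lam_gt0 (phi k)) Rlt_0_1 gap_le.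
have lam_inv : lam (phi k) * / lam (phi k) = 1 by apply/Rinv_r/Rgt_not_eq/lam_gt0.
have := lam_gt0 (phi k).
rewrite /Rdiv Rinv_1 => ? ? ?; nra.
Qed.

End ClusterPoint.

End PerturbedDual.

Unset Implicit Arguments.

Theorem lemma4p2 (P N : nat) (Phi : mat P N) (F : vec N -> ereal)
  (HFp : proper_fun F) (HFl : lsc F) (HFc : convex_fun F)
  (Hrec : forall z : vec N, (forall i, mapply Phi z i = 0) ->
            ~ (forall j, z j = 0) -> recession_pos F z)
  (ybar : vec P) (Hne : exists q, dual_sol Phi F 0 ybar q)
  (lam : nat -> R) (y : nat -> vec P)
  (Hlam : forall k, 0 < lam k)
  (Hcv1 : Un_cv (fun k => vnorm (vsub (y k) ybar) / lam k) 0)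
  (Hcv2 : Un_cv lam 0)
  (qs : nat -> vec P) (Hqs : forall k, dual_sol Phi F (lam k) (y k) (qs k))
  (qF : vec P) (HqF : min_norm_sol Phi F ybar qF) :
  vec_cv qs qF.
Proof.
have [[cF [conj_qF opt_qF]] _] := HqF.
have [K qs_bnd] := perturbed_sol_bounded conj_qF opt_qF Hlam Hqs Hcv1.
apply: (vec_cv_of_cluster qs_bnd) => phi qb phi_ge qs_cv.
apply: (min_norm_sol_unique HFp HqF).
  apply: (dual_sol0_of_conj_ub HFp opt_qF) => x r.
  exact: (cluster_conj_ub conj_qF opt_qF Hlam Hqs Hcv1 Hcv2 phi_ge qs_cv).
exact: (cluster_dot_le conj_qF opt_qF Hlam Hqs Hcv1 phi_ge qs_cv).
Qed.
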